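(* Let $G_1,\ldots,G_l$ be directed acyclic graphs with pairwise disjoint node sets, $n_i=|V(G_i)|$, $n=\sum_in_i$, where the nodes of each $G_i$ are indexed $1,\ldots,n_i$ according to a topological ordering (so every edge $(a,b)$ of $G_i$ satisfies $a>b$). Let $S$ be a sequence of length $n$ in which each $G_i$ occurs exactly $n_i$ times and no two consecutive entries are equal; identify the $j$th occurrence of $G_i$ in $S$ with the node of $G_i$ of index $j$, and let $T(w)=k$ if the node $w$ is identified with position $k$ of $S$. Let $G$ be the graph with node set $\bigcup_iV(G_i)$ and edge set $\bigcup_iE(G_i)$ together with, for each $k=1,\ldots,n-1$, an edge from the node identified with position $k$ to the node identified with position $k+1$. Let $v$ be the node with $T(v)=1$ and $V_C=\{v\}$. Then the LTI network on $G$ with control node set $V_C$ is strongly structurally controllable.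
   Context: Graphs are directed. A directed acyclic graph has no directed cycles. $\mathcal{Q}(G)=\{A\in\mathbb{R}^{n\times n}:\text{for } i\neq j,\ A_{ij}\neq0\iff(j,i)\in E(G)\}$; for control nodes $V_C=\{j_1,\ldots,j_k\}$ (nodes labeled $1,\ldots,n$), $B=[e_{j_1},\ldots,e_{j_k}]$; the LTI network $\dot x=Ax+Bu$ on $G$ with control nodes $V_C$ is strongly structurally controllable if $(A,B)$ is controllable for every $A\in\mathcal{Q}(G)$. *)

From HB Require Import structures.
From mathcomp Require Import all_boot all_order all_algebra.
From mathcomp Require Import reals.
Set Implicit Arguments. Unset Strict Implicit. Unset Printing Implicit Defensive.
Import Order.TTheory GRing.Theory Num.Theory.
Local Open Scope ring_scope.

Definition ctrb_mx (R : comRingType) (n m : nat) (A : 'M[R]_n) (B : 'M[R]_(n, m)) :=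
  \mxrow_(k < n) (A ^+ k *m B).

Definition controllable (R : fieldType) (n m : nat) (A : 'M[R]_n) (B : 'M[R]_(n, m)) :=
  \rank (ctrb_mx A B) = n.

(* Q(G) for a graph with edge relation e on a finite node type, the nodes
   being labelled 0..n-1 by the bijection lab:  for distinct nodes w, w',
   A_(lab w', lab w) <> 0  iff  (w, w') is an edge (from w to w'). *)
Definition in_Q (R : ringType) (V : finType) (n : nat) (lab : V -> 'I_n)
  (e : rel V) (A : 'M[R]_n) :=
  forall w w' : V, w != w' -> (A (lab w') (lab w) != 0) = e w w'.

Definition ctrl_B (R : ringType) (V : finType) (n : nat) (lab : V -> 'I_n) (v : V)
  : 'M[R]_(n, 1) := delta_mx (lab v) 0.

(* Position (0-based) of the j-th (0-based) occurrence of i in S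
   (= size S if there is none). *)
Definition occ_pos (T : eqType) (S : seq T) (i : T) (j : nat) : nat :=
  find (fun k => (nth i S k == i) && (count_mem i (take k S) == j))
       (iota 0 (size S)).

(* Nodes of the disjoint union of G_1..G_l: node j (0-based) of G_i. *)
Definition node (l : nat) (ns : 'I_l -> nat) : finType := {i : 'I_l & 'I_(ns i)}.

Definition Tpos (l : nat) (ns : 'I_l -> nat) (S : seq 'I_l) (w : node ns) : nat :=
  occ_pos S (tag w) (val (tagged w)).

Definition G_edge (l : nat) (ns : 'I_l -> nat) (E : 'I_l -> rel nat) (S : seq 'I_l)
  (w w' : node ns) : bool :=
  ((tag w == tag w') && E (tag w) (val (tagged w)) (val (tagged w')))
  || ((Tpos S w).+1 == Tpos S w').

From HB Require Import structures.
From mathcomp Require Import all_boot all_order all_algebra.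
From mathcomp Require Import reals.
Set Implicit Arguments. Unset Strict Implicit. Unset Printing Implicit Defensive.
Import Order.TTheory GRing.Theory Num.Theory.
Local Open Scope ring_scope.

(* Order the nodes of G by their position in S.  An edge of some G_i goes from
   a node to one of smaller index, and the nodes of G_i occur in S in the order
   of their indices, so it points backwards in S; the only forward edges are the
   path edges k -> k+1.  In this ordering every A in Q(G) is lower Hessenberg
   with a nonzero subdiagonal, so the last nonzero entry of A^k e_v sits exactly
   at position k: the Krylov vectors e_v, A e_v, ..., A^(n-1) e_v form a
   triangular, hence invertible, matrix. *)

Definition krylov_mx (R : pzRingType) (n : nat) (A : 'M[R]_n) (b : 'cV[R]_n)
  : 'M[R]_n := \matrix_(i, k) (A ^+ k *m b) i 0.

Lemma krylov_mxE (R : comRingType) (n : nat) (A : 'M[R]_n) (b : 'cV[R]_n) :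
  krylov_mx A b = ctrb_mx A b *m \mxcol_(k < n) (delta_mx 0 k : 'rV[R]_n).
Proof.
apply/matrixP => i j; rewrite mul_mxrow_mxcol summxE (bigD1 j) //= big1 ?addr0.
  by rewrite !mxE big_ord1 !mxE eqxx andbT mulr1.
by move=> k /negbTE k_j; rewrite !mxE big_ord1 !mxE [j == k]eq_sym k_j andbF mulr0.
Qed.

Lemma controllable_krylov (R : fieldType) (n : nat) (A : 'M[R]_n) (b : 'cV[R]_n) :
  \rank (krylov_mx A b) = n -> controllable A b.
Proof.
move=> rank_krylov; apply/eqP; rewrite eqn_leq rank_leq_row /=.
by rewrite -[X in (X <= _)%N]rank_krylov krylov_mxE mxrankM_maxl.
Qed.

Section HessenbergControllable.

Variables (R : fieldType) (n : nat) (A : 'M[R]_n) (s : 'I_n -> 'I_n).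
Hypothesis s_inj : injective s.
Hypothesis A_below_subdiag : forall m k : 'I_n, (m.+1 < k)%N -> A (s k) (s m) = 0.
Hypothesis A_subdiag : forall m k : 'I_n, k = m.+1 :> nat -> A (s k) (s m) != 0.
Variable k0 : 'I_n.
Hypothesis k0_eq0 : k0 = 0 :> nat.

Let b : 'cV[R]_n := delta_mx (s k0) 0.

Lemma mulmx_reindex (x : 'cV[R]_n) (i : 'I_n) :
  (A *m x) (s i) 0 = \sum_(m < n) A (s i) (s m) * x (s m) 0.
Proof. by rewrite mxE (reindex_inj s_inj). Qed.

Lemma krylov_entry_gt (k : nat) (i : 'I_n) : (k < i)%N -> (A ^+ k *m b) (s i) 0 = 0.
Proof.
elim: k i => [|k IHk] i k_i.
  by rewrite mul1mx mxE (inj_eq s_inj) -val_eqE /= k0_eq0 (gtn_eqF k_i).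
rewrite exprS -mulmxE -mulmxA mulmx_reindex big1 // => m _.
have [k_m | m_k] := ltnP k m; first by rewrite IHk ?mulr0.
by rewrite A_below_subdiag ?mul0r // (leq_ltn_trans _ k_i).
Qed.

Lemma krylov_entry_diag (i : 'I_n) : (A ^+ i *m b) (s i) 0 != 0.
Proof.
case: i => k; elim: k => [|k IHk] k_n.
  by rewrite mul1mx mxE (inj_eq s_inj) -val_eqE /= k0_eq0 eqxx oner_neq0.
have k_n' : (k < n)%N by apply: ltnW.
rewrite exprS -mulmxE -mulmxA mulmx_reindex (bigD1 (Ordinal k_n')) //= big1 ?addr0.
  by apply: mulf_neq0; [apply: A_subdiag | apply: IHk].
move=> m m_k; have [k_m | m_k' | k_eq_m] := ltngtP k m.
- by rewrite krylov_entry_gt ?mulr0.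
- by rewrite A_below_subdiag ?mul0r.
- by rewrite -val_eqE /= k_eq_m eqxx in m_k.
Qed.

(* Reordering its rows by [s] makes the Krylov matrix upper triangular with a
   nonzero diagonal. *)
Lemma hessenberg_controllable : controllable A b.
Proof.
apply: controllable_krylov; apply/eqP; rewrite eqn_leq rank_leq_row /=.
set M := rowsub s (krylov_mx A b).
have M_trig : is_trig_mx M^T.
  by apply/is_trig_mxP => i j i_j; rewrite 3!mxE krylov_entry_gt.
have M_unit : M^T \in unitmx.
  rewrite unitmxE unitfE det_trig //; apply/prodf_neq0 => i _.
  by rewrite 3!mxE krylov_entry_diag.
by rewrite -[X in (X <= _)%N](mxrank_unit M_unit) mxrank_tr mxrankS ?rowsub_sub.
Qed.

End HessenbergControllable.

Lemma find_iota0 (p : pred nat) (n k : nat) : (k < n)%N -> p k ->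
  (forall k', (k' < k)%N -> ~~ p k') -> find p (iota 0 n) = k.
Proof.
move=> k_n pk before_k; have [lt_k | gt_k | //] := ltngtP (find p (iota 0 n)) k.
  have has_p : has p (iota 0 n) by apply/hasP; exists k; rewrite ?mem_iota.
  have := nth_find 0 has_p; rewrite nth_iota ?(ltn_trans lt_k) //.
  by rewrite (negbTE (before_k _ lt_k)).
by have := before_find 0 gt_k; rewrite nth_iota // pk.
Qed.

Section Occurrences.

Variables (T : eqType) (S : seq T).

Lemma count_take_leq (x : T) (a b : nat) : (a <= b)%N ->
  (count_mem x (take a S) <= count_mem x (take b S))%N.
Proof. by move=> a_b; rewrite -(subnKC a_b) takeD count_cat leq_addr. Qed.

Lemma count_take_nth_lt (x0 : T) (a b : nat) : (a < b)%N -> (a < size S)%N ->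
  (count_mem (nth x0 S a) (take a S) < count_mem (nth x0 S a) (take b S))%N.
Proof.
move=> a_b a_S; apply: leq_trans (count_take_leq _ a_b).
by rewrite (take_nth x0 a_S) -cats1 count_cat /= eqxx addn1.
Qed.

Lemma occ_pos_nth (x0 : T) (k : nat) : (k < size S)%N ->
  occ_pos S (nth x0 S k) (count_mem (nth x0 S k) (take k S)) = k.
Proof.
move=> k_S; apply: find_iota0 => //; first by rewrite (set_nth_default x0) ?eqxx.
move=> k' k'_k; apply/andP => -[/eqP nth_k' /eqP count_k'].
have k'_S := ltn_trans k'_k k_S.
rewrite (set_nth_default x0) // in nth_k'.
by have := count_take_nth_lt x0 k'_k k'_S; rewrite nth_k' count_k' ltnn.
Qed.

Lemma occ_posP (i : T) (j : nat) : (occ_pos S i j < size S)%N ->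
  nth i S (occ_pos S i j) = i /\ count_mem i (take (occ_pos S i j) S) = j.
Proof.
rewrite /occ_pos => occ_S; set p := (X in find X).
have has_occ : has p (iota 0 (size S)) by rewrite has_find size_iota.
by have := nth_find 0 has_occ; rewrite nth_iota // => /andP[/eqP -> /eqP ->].
Qed.

End Occurrences.

Lemma eq_node (l : nat) (ns : 'I_l -> nat) (w w' : node ns) :
  tag w = tag w' -> val (tagged w) = val (tagged w') -> w = w'.
Proof.
case: w => i x; case: w' => i' x' /= i_i'; subst i' => x_x'.
by congr Tagged; apply: val_inj.
Qed.

Section NodesInOrder.

Variables (l : nat) (ns : 'I_l -> nat) (S : seq 'I_l) (n : nat).
Hypothesis size_S : size S = n.
Hypothesis count_S : forall i : 'I_l, count_mem i S = ns i.
Variable x0 : 'I_l.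

Lemma node_index_lt (k : 'I_n) :
  (count_mem (nth x0 S k) (take k S) < ns (nth x0 S k))%N.
Proof.
have k_S : (k < size S)%N by rewrite size_S.
by have := count_take_nth_lt x0 k_S k_S; rewrite take_size count_S.
Qed.

Definition node_at (k : 'I_n) : node ns :=
  Tagged (fun i => 'I_(ns i)) (Ordinal (node_index_lt k)).

Lemma Tpos_node_at (k : 'I_n) : Tpos S (node_at k) = k.
Proof. by rewrite /Tpos occ_pos_nth ?size_S. Qed.

Lemma node_at_inj : injective node_at.
Proof. by move=> k k' /(congr1 (Tpos S)); rewrite !Tpos_node_at => /val_inj. Qed.

Lemma node_at_Tpos (w : node ns) (w_n : (Tpos S w < n)%N) :
  node_at (Ordinal w_n) = w.
Proof.
have w_S : (Tpos S w < size S)%N by rewrite size_S.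
have [nth_w count_w] := occ_posP w_S.
have tag_w : nth x0 S (Tpos S w) = tag w by rewrite (set_nth_default (tag w)).
by apply: eq_node; rewrite /= tag_w.
Qed.

Lemma G_edge_node_at_succ (E : 'I_l -> rel nat) (m k : 'I_n) :
  k = m.+1 :> nat -> G_edge E S (node_at m) (node_at k).
Proof. by move=> k_m; rewrite /G_edge !Tpos_node_at k_m eqxx orbT. Qed.

Lemma G_edge_node_at_leq (E : 'I_l -> rel nat)
    (E_desc : forall (i : 'I_l) (a b : nat), E i a b -> (b < a)%N) (m k : 'I_n) :
  G_edge E S (node_at m) (node_at k) -> (k <= m.+1)%N.
Proof.
rewrite /G_edge !Tpos_node_at => /orP[/andP[/eqP /= tag_mk /E_desc]|/eqP <- //].
rewrite tag_mk; apply: contraLR; rewrite -ltnNge -leqNgt => m_k.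
by apply/count_take_leq/ltnW/ltnW.
Qed.

End NodesInOrder.

Theorem proposition4 (R : realType) (l : nat) (ns : 'I_l -> nat)
  (E : 'I_l -> rel nat)
  (* each G_i has nodes 0..ns i - 1 in topological order: every edge (a,b) has b < a *)
  (hE : forall (i : 'I_l) (a b : nat), E i a b -> ((a < ns i) && (b < a))%N)
  (n : nat) (hn : n = (\sum_(i < l) ns i)%N)
  (S : seq 'I_l) (hS : size S = n)
  (hcount : forall i : 'I_l, count_mem i S = ns i)
  (hnoadj : forall (x0 : 'I_l) (k : nat), (k.+1 < size S)%N -> nth x0 S k != nth x0 S k.+1)
  (v : node ns) (hv : Tpos S v = 0%N)
  (lab : node ns -> 'I_n) (hlab : bijective lab) :
  forall A : 'M[R]_n, in_Q lab (G_edge E S) A -> controllable A (ctrl_B R lab v).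
Proof.
move=> A A_Q.
have v_n : (Tpos S v < n)%N by rewrite hv; case: (lab v) => k /(leq_ltn_trans (leq0n k)).
pose nd := node_at hS hcount (tag v).
have nd_inj : injective nd by apply: node_at_inj.
have nd_neq (m k : 'I_n) : m != k -> nd m != nd k by rewrite (inj_eq nd_inj).
have E_desc i a b : E i a b -> (b < a)%N by move/hE/andP => [].
rewrite /ctrl_B -(node_at_Tpos hS hcount (tag v) v_n).
apply: (@hessenberg_controllable _ _ A (lab \o nd)) => //.
- exact: inj_comp (bij_inj hlab) nd_inj.
- move=> m k m_k /=; apply/eqP; rewrite -[_ == 0]negbK A_Q; last first.
    by rewrite nd_neq // neq_ltn (ltn_trans _ m_k).
  by apply/negP => /(G_edge_node_at_leq E_desc); rewrite leqNgt m_k.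
- by move=> m k k_m /=; rewrite A_Q ?G_edge_node_at_succ // nd_neq // -val_eqE /= k_m ltn_eqF.
Qed.
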